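(* (1) Every $\alpha_{2^-}$ topological space is locally Ramsey. (2) Every $\alpha_{2^-}$ topological group is Ramsey.
   Context: A countably infinite set $A$ in a space $X$ converges to $x\in X$ if $x\notin A$ and every neighborhood of $x$ contains all but finitely many elements of $A$. $\lim_m x_{nm}=x$ means $x_{nm}\neq x$ for all $m$ and every neighborhood of $x$ contains $x_{nm}$ for all but finitely many $m$. A space $X$ is $\alpha_{2^-}$ if for each $x\in X$, whenever $\lim_m x_{nm}=x$ for all $n\in\mathbb N$, there are $m_1<m_2<\dots$ such that $\bigcup_n\{x_{1m_n},\dots,x_{nm_n}\}$ converges to $x$. A space $X$ is locally Ramsey if for each $x\in X$, whenever $\lim_m x_{nm}=x$ for all $n$, there is an infinite $I\subseteq\mathbb N$ such that $\{x_{nm}: n,m\in I,\ n<m\}$ converges to $x$. A space $X$ is Ramsey (Nogura–Shakhmatov) if whenever $\lim_n\lim_m x_{nm}=x$ (i.e., $\lim_m x_{nm}=x_n$ for each $n$ and $\lim_n x_n=x$), there is an infinite $I\subseteq\mathbb N$ such that for each neighborhood $U$ of $x$ there is $k$ with $\{x_{nm}: k<n<m,\ n,m\in I\}\subseteq U$. *)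

From HB Require Import structures.
From mathcomp Require Import all_boot all_order all_algebra.
From mathcomp Require Import all_classical all_reals all_analysis.
Set Implicit Arguments. Unset Strict Implicit. Unset Printing Implicit Defensive.
Local Open Scope classical_set_scope.

Definition seq_lim (X : topologicalType) (s : nat -> X) (x : X) : Prop :=
  (forall m, s m <> x) /\ (s @ \oo --> x).

Definition set_conv (X : topologicalType) (A : set X) (x : X) : Prop :=
  countable A /\ infinite_set A /\ ~ A x /\
  (forall U, nbhs x U -> finite_set (A `\` U)).

(* alpha_{2^-} (indices shifted to start at 0) *)
Definition alpha2m (X : topologicalType) : Prop :=
  forall (x : X) (s : nat -> nat -> X), (forall n, seq_lim (s n) x) ->
  exists mm : nat -> nat, (forall n, (mm n < mm n.+1)%N) /\
    set_conv [set y | exists n i, (i <= n)%N /\ y = s i (mm n)] x.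

Definition locally_ramsey (X : topologicalType) : Prop :=
  forall (x : X) (s : nat -> nat -> X), (forall n, seq_lim (s n) x) ->
  exists I : set nat, infinite_set I /\
    set_conv [set y | exists n m, I n /\ I m /\ (n < m)%N /\ y = s n m] x.

(* Ramsey in the sense of Nogura--Shakhmatov *)
Definition ramsey (X : topologicalType) : Prop :=
  forall (x : X) (s : nat -> nat -> X) (xs : nat -> X),
  (forall n, seq_lim (s n) (xs n)) -> seq_lim xs x ->
  exists I : set nat, infinite_set I /\
    forall U, nbhs x U -> exists k : nat,
      forall n m, I n -> I m -> (k < n)%N -> (n < m)%N -> U (s n m).

Definition topological_group (X : topologicalType) (mul : X -> X -> X)
  (inv : X -> X) (e : X) : Prop :=
  associative mul /\ left_id e mul /\ left_inverse e inv mul /\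
  continuous (fun p : X * X => mul p.1 p.2) /\ continuous inv.

From HB Require Import structures.
From mathcomp Require Import all_boot all_order all_algebra.
From mathcomp Require Import all_classical all_reals all_analysis.
From mathcomp Require Import zify.
Set Implicit Arguments. Unset Strict Implicit. Unset Printing Implicit Defensive.
Local Open Scope classical_set_scope.

(* Given sequences y_n -> x, the alpha_{2^-} property yields a diagonal set
   {y_i (m_n) : i <= n} converging to x.  Sampling indices along a fast enough
   increasing g puts every y_{g a} (g b), a < b, into that set, which is local
   Ramseyness.  In a topological group, x_{nm} -> x_n -> x is translated to
   y_{nm} = x_{nm} x_n^-1 x -> x; g can moreover be chosen so sparse that the value
   y_{nm} determines m.  Then the finitely many y_{nm} outside a neighbourhood V of x
   have bounded m, and x_{nm} = (y_{nm} x^-1) x_n lies in any prescribed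
   neighbourhood of x once n is large. *)

Lemma finite_nat_bounded (A : set nat) :
  finite_set A -> exists M, forall n, A n -> (n < M)%N.
Proof.
move=> /finite_fsetP [F ->].
exists (\max_(i <- finmap.enum_fset F) i).+1 => n /= nF.
by rewrite ltnS; apply: leq_bigmax_seq.
Qed.

Section IncreasingIndices.
Variable g : nat -> nat.
Hypothesis g_incr : forall n, (g n < g n.+1)%N.

Lemma incr_leq_mono : {mono g : m n / (m <= n)%N}.
Proof. exact: leq_mono (homo_ltn ltn_trans g_incr). Qed.

Lemma incr_ltn_mono : {mono g : m n / (m < n)%N}.
Proof. exact: leqW_mono incr_leq_mono. Qed.

Lemma incr_geq_id n : (n <= g n)%N.
Proof. by elim: n => [|n IHn] //; apply: leq_ltn_trans IHn (g_incr n). Qed.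

Lemma incr_range_infinite : infinite_set (range g).
Proof.
move=> /finite_nat_bounded [M gM].
by have := gM (g M) (ex_intro2 _ _ M I erefl); rewrite ltnNge incr_geq_id.
Qed.

End IncreasingIndices.

Lemma seq_lim_subseq (X : topologicalType) (s : nat -> X) (x : X) (h : nat -> nat) :
  (forall m, (m <= h m)%N) -> seq_lim s x -> seq_lim (s \o h) x.
Proof.
move=> h_ge [s_neq s_cvg]; split=> [m|U /s_cvg [N _ sNU]]; first exact: s_neq.
by exists N => // m /leq_trans /(_ (h_ge m)) /sNU.
Qed.

Lemma set_conv_sub (X : topologicalType) (A B : set X) (x : X) :
  set_conv A x -> B `<=` A -> infinite_set B -> set_conv B x.
Proof.
move=> [A_count [_ [Ax A_fin]]] BA B_inf.
split; first exact: sub_countable (subset_card_le BA) A_count.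
split=> //; split=> [/BA //|U /A_fin]; apply: sub_finite_set => z [/BA Az nUz] //.
Qed.

Definition upper_pairs (X : Type) (y : nat -> nat -> X) (I : set nat) : set X :=
  [set z | exists n m, I n /\ I m /\ (n < m)%N /\ z = y n m].

Lemma upper_pairs_rangeP (X : Type) (y : nat -> nat -> X) (g : nat -> nat) z :
  (forall n, (g n < g n.+1)%N) ->
  upper_pairs y (range g) z <-> exists a b, (a < b)%N /\ z = y (g a) (g b).
Proof.
move=> g_incr; split=> [[_ [_ [[a _ <-] [[b _ <-] [ab ->]]]]]|[a [b [ab ->]]]].
  by exists a, b; rewrite -(incr_ltn_mono g_incr).
by exists (g a), (g b); rewrite incr_ltn_mono.
Qed.

Definition fresh_beyond (T : Type) (y : nat -> nat -> T) (N : nat -> nat) : Prop :=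
  forall p m0, (N p <= m0)%N ->
    forall n1 n2 m2, (n1 <= p)%N -> (n2 <= p)%N -> (m2 <= p)%N -> y n1 m0 <> y n2 m2.

Section Alpha2mSpace.
Variable X : topologicalType.
Hypothesis hX : alpha2m X.

Lemma alpha2m_range_infinite (x : X) (s : nat -> X) :
  seq_lim s x -> infinite_set (range s).
Proof.
move=> sx; have [mm [_ [_ [A_inf _]]]] := hX (fun=> sx).
by apply: contra_not A_inf; apply: sub_finite_set => z [n [i [_ ->]]].
Qed.

Lemma alpha2m_separation (x y : X) : y <> x -> exists2 U, nbhs x U & ~ U y.
Proof.
move=> yx; apply: contrapT => no_sep.
have cst_lim : seq_lim (fun=> y) x.
  split=> // U xU; exists 0 => // m _; apply: contrapT => nUy.
  by apply: no_sep; exists U.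
apply: (alpha2m_range_infinite cst_lim).
by apply: sub_finite_set (finite_set1 y) => _ [m _ <-].
Qed.

Lemma alpha2m_sparse_diagonal (x : X) (y : nat -> nat -> X) (N : nat -> nat) :
  (forall n, seq_lim (y n) x) ->
  exists g : nat -> nat, [/\ forall b, (g b < g b.+1)%N,
    forall b, (N (g b) <= g b.+1)%N & set_conv (upper_pairs y (range g)) x].
Proof.
move=> yx; have [mm [mm_incr A_conv]] := hX yx.
pose k b := iter b (fun q => maxn (mm q).+1 (N (mm q))) 0.
pose g b := mm (k b).
(* k b.+1 exceeds both g b and N (g b), so y (g a) (g b) = y (g a) (mm (k b))
   with g a < k b is a point of the diagonal set. *)
have g_lt_k b : (g b < k b.+1)%N by exact: leq_maxl.
have k_incr b : (k b < k b.+1)%N.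
  exact: leq_ltn_trans (incr_geq_id mm_incr (k b)) (g_lt_k b).
have g_incr b : (g b < g b.+1)%N.
  exact: leq_trans (g_lt_k b) (incr_geq_id mm_incr _).
have gN b : (N (g b) <= g b.+1)%N.
  exact: leq_trans (leq_maxr _ _) (incr_geq_id mm_incr (k b.+1)).
exists g; split=> //; apply: set_conv_sub A_conv _ _.
  move=> _ /(upper_pairs_rangeP _ _ g_incr) [a [b [ab ->]]].
  exists (k b), (g a); split=> //.
  by apply: ltnW; apply: leq_trans (g_lt_k a) _; rewrite (incr_leq_mono k_incr).
have y0_lim : seq_lim (y (g 0) \o (g \o succn)) x.
  apply: seq_lim_subseq (yx _) => m.
  exact: leq_trans (leqnSn m) (incr_geq_id g_incr _).
apply: contra_not (alpha2m_range_infinite y0_lim); apply: sub_finite_set.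
by move=> _ [m _ <-]; apply/(upper_pairs_rangeP _ _ g_incr); exists 0, m.+1.
Qed.

Lemma alpha2m_locally_ramsey : locally_ramsey X.
Proof.
move=> x s sx; have [g [g_incr _ conv]] := alpha2m_sparse_diagonal (fun=> 0) sx.
by exists (range g); split=> //; exact: incr_range_infinite.
Qed.

Lemma alpha2m_eventually_fresh (x : X) (y : nat -> nat -> X) :
  (forall n, seq_lim (y n) x) -> exists N, fresh_beyond y N.
Proof.
move=> yx.
have fresh p : exists N, forall m0, (N <= m0)%N ->
    forall i : 'I_p.+1 * 'I_p.+1 * 'I_p.+1, y i.1.1 m0 <> y i.1.2 i.2.
  suff [N _ HN] : \forall m0 \near \oo,
      forall i : 'I_p.+1 * 'I_p.+1 * 'I_p.+1, y i.1.1 m0 <> y i.1.2 i.2.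
    by exists N => m0 /HN.
  apply: filter_forall => -[[n1 n2] m2].
  have [U xU nUy] := alpha2m_separation (proj1 (yx n2) m2).
  near=> m0 => e; apply: nUy; rewrite -e; near: m0.
  exact: (yx n1).2 U xU.
have [N HN] := choice fresh.
exists N => p m0 /HN fresh_m0 n1 n2 m2 n1p n2p m2p.
by apply: (fresh_m0 (Ordinal _, Ordinal _, Ordinal _)); rewrite ltnS.
Unshelve. all: end_near.
Qed.

End Alpha2mSpace.

Lemma upper_pairs_index_unique (T : Type) (y : nat -> nat -> T) (N g : nat -> nat) :
  (forall b, (g b < g b.+1)%N) -> (forall b, (N (g b) <= g b.+1)%N) ->
  fresh_beyond y N ->
  forall n m n' m', range g n -> range g m -> range g n' -> range g m' ->
    (n < m)%N -> (n' < m')%N -> y n m = y n' m' -> m = m'.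
Proof.
move=> g_incr gN fresh.
suff lt_neq a b c d : (a < b)%N -> (c < d)%N -> (b < d)%N -> y (g a) (g b) <> y (g c) (g d).
  move=> _ _ _ _ [a _ <-] [b _ <-] [c _ <-] [d _ <-].
  rewrite !(incr_ltn_mono g_incr) => ab cd e.
  by case: (ltngtP b d) => [bd|db|-> //]; [case: (lt_neq a b c d)|case: (lt_neq c d a b)].
case: d => [//|d] ab cd bd e; apply: (fresh (g d) (g d.+1) (gN d) (g c) (g a) (g b)) => //.
all: rewrite (incr_leq_mono g_incr); lia.
Qed.

Lemma finite_bounded_index (T : Type) (F : set T) (idx : T -> nat -> Prop) :
  finite_set F -> (forall z m m', idx z m -> idx z m' -> m = m') ->
  exists M, forall z m, F z -> idx z m -> (m < M)%N.
Proof.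
move=> F_fin idx_uniq.
have [f fP] : {f : T -> nat & forall z m, idx z m -> f z = m}.
  apply: (@choice _ _ (fun z u => forall m, idx z m -> u = m)) => z.
  have [[m zm]|no_idx] := pselect (exists m, idx z m).
    by exists m => m' /(idx_uniq _ _ _ zm).
  by exists 0 => m zm; case: no_idx; exists m.
have [M fM] := finite_nat_bounded (finite_image f F_fin).
by exists M => z m Fz /fP <-; apply: fM; exists z.
Qed.

Section TopologicalGroup.
Variables (X : topologicalType) (mul : X -> X -> X) (inv : X -> X) (e : X).
Hypothesis tg : topological_group mul inv e.

Let mulA : associative mul := tg.1.
Let mul1 : left_id e mul := tg.2.1.
Let mulV : left_inverse e inv mul := tg.2.2.1.

Lemma tg_mulVr a : mul a (inv a) = e.
Proof.
by rewrite -[LHS]mul1 -(mulV (inv a)) -mulA [mul (inv a) _]mulA mulV mul1.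
Qed.

Lemma tg_mulr1 a : mul a e = a.
Proof. by rewrite -(mulV a) mulA tg_mulVr mul1. Qed.

Lemma tg_mulrK c a : mul (mul a c) (inv c) = a.
Proof. by rewrite -mulA tg_mulVr tg_mulr1. Qed.

Lemma tg_mulrVK c a : mul (mul a (inv c)) c = a.
Proof. by rewrite -mulA mulV tg_mulr1. Qed.

Lemma tg_translate_lim (s : nat -> X) (a x : X) :
  seq_lim s a -> seq_lim (fun m => mul (mul (s m) (inv a)) x) x.
Proof.
move=> [s_neq s_cvg]; split=> [m sx|].
  apply: (s_neq m); rewrite -[s m](tg_mulrVK a) -[a in RHS]mul1.
  by congr mul; rewrite -[mul _ _](tg_mulrK x) -[x in mul x _]mul1 sx tg_mulrK.
have cvgM (f h : nat -> X) b c : f @ \oo --> b -> h @ \oo --> c ->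
    (fun m => mul (f m) (h m)) @ \oo --> mul b c.
  by move=> fb hc; apply: cvg_comp2 fb hc _; exact: tg.2.2.2.1 (b, c).
have := cvgM _ _ _ _ (cvgM _ _ _ _ s_cvg (cvg_cst (inv a))) (cvg_cst x).
by rewrite tg_mulVr mul1; apply.
Qed.

Lemma tg_nbhs_split (x : X) (U : set X) : nbhs x U ->
  exists V W, [/\ nbhs x V, nbhs x W & forall u v, V u -> W v -> U (mul (mul u (inv x)) v)].
Proof.
move=> xU.
have [[P W] /= [eP xW] PWU] := tg.2.2.2.1 (e, x) U ltac:(by rewrite /= mul1).
have [[V V'] /= [xV xV'] VV'P] := tg.2.2.2.1 (x, inv x) P ltac:(by rewrite /= tg_mulVr).
exists V, W; split=> // u v Vu Wv.
by apply: (PWU (_, v)); split=> //; apply: (VV'P (u, inv x)); split=> //; exact: nbhs_singleton.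
Qed.

Lemma tg_alpha2m_ramsey : alpha2m X -> ramsey X.
Proof.
move=> hX x s xs sxs xsx.
pose y n m := mul (mul (s n m) (inv (xs n))) x.
have yx n : seq_lim (y n) x by exact: tg_translate_lim.
have [N fresh] := alpha2m_eventually_fresh hX yx.
have [g [g_incr gN [_ [_ [_ conv]]]]] := alpha2m_sparse_diagonal hX N yx.
exists (range g); split=> [|U xU]; first exact: incr_range_infinite.
have [V [W [xV xW VWU]]] := tg_nbhs_split xU.
pose idx z m := exists n, range g n /\ range g m /\ (n < m)%N /\ z = y n m.
have idx_uniq z m m' : idx z m -> idx z m' -> m = m'.
  move=> [n [In [Im [nm ->]]]] [n' [In' [Im' [nm' e']]]].
  exact: upper_pairs_index_unique g_incr gN fresh _ _ _ _ In Im In' Im' nm nm' e'.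
have [M fewV] := finite_bounded_index (conv V xV) idx_uniq.
have [N1 _ N1W] := xsx.2 W xW.
exists (maxn N1 M) => n m In Im kn nm.
rewrite -[s n m](tg_mulrVK (xs n)) -[mul _ (inv _)](tg_mulrK x).
apply: VWU; last by apply: N1W => /=; lia.
apply: contrapT => nVy.
have : (m < M)%N by apply: (fewV (y n m)); [split=> //; exists n, m | exists n].
lia.
Qed.

End TopologicalGroup.

Theorem proposition2p5 :
  (forall X : topologicalType, alpha2m X -> locally_ramsey X) /\
  (forall (X : topologicalType) (mul : X -> X -> X) (inv : X -> X) (e : X),
     topological_group mul inv e -> alpha2m X -> ramsey X).
Proof.
split=> [X|X mul inv e tg]; [exact: alpha2m_locally_ramsey | exact: tg_alpha2m_ramsey tg].
Qed.
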